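(* Let $H$ be a Hopf algebra with invertible antipode $S$ and let $B=A^{coH}\subseteq A$ be an $H$-Hopf–Galois extension with translation map $\tau$. Define the left coaction ${}^A\delta:A\to H\otimes A$, ${}^A\delta(a)=S^{-1}(a_{(1)})\otimes a_{(0)}$, and $$A^H\square{}^HA:=\ker(\delta^A\otimes\mathrm{id}_A-\mathrm{id}_A\otimes{}^A\delta)=\{\textstyle\sum a\otimes\tilde a\in A\otimes A:\ \sum a_{(0)}\otimes a_{(1)}\otimes\tilde a=\sum a\otimes S^{-1}(\tilde a_{(1)})\otimes\tilde a_{(0)}\}.$$ Then $A^H\square{}^HA$ coincides with $(A\otimes A)^{coH}=\{X\in A\otimes A:\delta^{A\otimes A}(X)=X\otimes 1_H\}$, where $\delta^{A\otimes A}(a\otimes\tilde a)=a_{(0)}\otimes\tilde a_{(0)}\otimes a_{(1)}\tilde a_{(1)}$, and with $\mathcal{C}:=\{\sum a\otimes\tilde a\in A\otimes A:\ \sum a_{(0)}\otimes a_{(1)}^{\langle 1\rangle}\otimes_B a_{(1)}^{\langle 2\rangle}\tilde a=\sum a\otimes\tilde a\otimes_B 1_A\}$.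
   Context: All algebras are unital and associative over $\mathbb{C}$; Sweedler notation with implicit summation is used. $A$ is a right $H$-comodule algebra with coaction $\delta^A(a)=a_{(0)}\otimes a_{(1)}$, $B=A^{coH}=\{b\in A:\delta^A(b)=b\otimes 1_H\}$. The extension is $H$-Hopf–Galois if $\chi:A\otimes_B A\to A\otimes H$, $a'\otimes_B a\mapsto a'a_{(0)}\otimes a_{(1)}$, is bijective; the translation map is $\tau(h)=\chi^{-1}(1_A\otimes h)=:h^{\langle 1\rangle}\otimes_B h^{\langle 2\rangle}$. *)

(* Tensor products of (possibly infinite-dimensional)
   vector spaces are not in the library: we axiomatise them by their
   universal property (a record of data + laws, quantified over in the
   theorem), and derive all induced maps (f (x) g, associators, the
   multiplication of tensor product algebras, ...) from the lifting map. *)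
From HB Require Import structures.
From mathcomp Require Import all_boot all_algebra.
Set Implicit Arguments. Unset Strict Implicit. Unset Printing Implicit Defensive.
Import GRing.Theory.
Local Open Scope ring_scope.

Section Tensor.
Variable F : fieldType.

Definition lin (U V : lmodType F) (f : U -> V) :=
  forall (a : F) (u v : U), f (a *: u + v) = a *: f u + f v.
Definition bilin (U V W : lmodType F) (f : U -> V -> W) :=
  (forall v, lin (fun u => f u v)) /\ (forall u, lin (f u)).

(* A tensor product of U and V, "relative to" an extra condition P on the
   bilinear maps (P = True: tensor product over F; P = B-balanced: the
   tensor product over a subalgebra B).  [tcarrier T] is the universal
   object: [tens] is bilinear and satisfies P, every bilinear map satisfying
   P factors (via [tlift]) through a linear map, and linear maps agreeing on
   the elementary tensors are equal. *)
Record tensor_with (U V : lmodType F)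
    (P : forall W : lmodType F, (U -> V -> W) -> Prop) := TensorWith {
  tcarrier : lmodType F;
  tens : U -> V -> tcarrier;
  tens_bilin : bilin tens;
  tens_P : P tcarrier tens;
  tlift : forall W : lmodType F, (U -> V -> W) -> tcarrier -> W;
  tlift_lin : forall (W : lmodType F) (f : U -> V -> W),
      bilin f -> P W f -> lin (tlift f);
  tliftE : forall (W : lmodType F) (f : U -> V -> W),
      bilin f -> P W f -> forall u v, tlift f (tens u v) = f u v;
  tens_ext : forall (W : lmodType F) (g h : tcarrier -> W), lin g -> lin h ->
      (forall u v, g (tens u v) = h (tens u v)) -> forall x, g x = h x
}.


Arguments tcarrier {U V P} t : rename.
Arguments tens {U V P} t : rename.
Arguments tlift {U V P} t {W} f : rename.
Definition no_cond (U V : lmodType F) : forall W : lmodType F, (U -> V -> W) -> Prop :=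
  fun _ _ => True.

Definition tensor (U V : lmodType F) := tensor_with (@no_cond U V).

Definition tmap (U V U' V' : lmodType F) P (T : tensor_with (U:=U) (V:=V) P)
    (T' : tensor U' V') (f : U -> U') (g : V -> V') : tcarrier T -> tcarrier T' :=
  tlift T (fun u v => tens T' (f u) (g v)).

Definition tassoc (U V W : lmodType F) (T1 : tensor U V) (T12 : tensor (tcarrier T1) W)
    (T2 : tensor V W) (T23 : tensor U (tcarrier T2)) : tcarrier T12 -> tcarrier T23 :=
  tlift T12 (fun x w => tlift T1 (fun u v => tens T23 u (tens T2 v w)) x).


Arguments tmap {U V U' V' P} T T' f g.
Arguments tassoc {U V W} T1 T12 T2 T23.

Definition tmul (U V : algType F) (T : tensor U V) (x y : tcarrier T) : tcarrier T :=
  tlift T (fun u v => tlift T (fun u' v' => tens T (u * u') (v * v')) y) x.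

(* (H, Delta, eps, S) is a Hopf algebra; HH = H (x) H, and HH_H, H_HH are
   the two bracketings of H (x) H (x) H. *)
Definition is_hopf (H : algType F) (HH : tensor H H)
    (HH_H : tensor (tcarrier HH) H) (H_HH : tensor H (tcarrier HH))
    (Delta : H -> tcarrier HH) (eps : H -> F) (S : H -> H) : Prop :=
  [/\ lin Delta,
      (forall h h', Delta (h * h') = tmul (Delta h) (Delta h')) &
      Delta 1 = tens HH 1 1] /\
  (forall h, tassoc HH HH_H HH H_HH (tmap HH HH_H Delta id (Delta h))
             = tmap HH H_HH id Delta (Delta h)) /\
  [/\ (forall a h h', eps (a *: h + h') = a * eps h + eps h'),
      (forall h h', eps (h * h') = eps h * eps h') &
      eps 1 = 1] /\
  (forall h, tlift HH (fun h1 h2 => eps h1 *: h2) (Delta h) = h) /\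
  (forall h, tlift HH (fun h1 h2 => eps h2 *: h1) (Delta h) = h) /\
  [/\ lin S,
      (forall h, tlift HH (fun h1 h2 => S h1 * h2) (Delta h) = eps h *: 1) &
      (forall h, tlift HH (fun h1 h2 => h1 * S h2) (Delta h) = eps h *: 1)].

(* (A, delta) is a right H-comodule algebra; AH = A (x) H, and AH_H, A_HH
   are the two bracketings of A (x) H (x) H. *)
Definition is_comod_alg (H A : algType F) (HH : tensor H H) (Delta : H -> tcarrier HH)
    (eps : H -> F) (AH : tensor A H)
    (AH_H : tensor (tcarrier AH) H) (A_HH : tensor A (tcarrier HH))
    (delta : A -> tcarrier AH) : Prop :=
  [/\ lin delta,
      (forall a, tassoc AH AH_H HH A_HH (tmap AH AH_H delta id (delta a))
                 = tmap AH A_HH id Delta (delta a)),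
      (forall a, tlift AH (fun a0 h => eps h *: a0) (delta a) = a),
      (forall a a', delta (a * a') = tmul (delta a) (delta a')) &
      delta 1 = tens AH 1 1].

Definition coinv (H A : algType F) (AH : tensor A H) (delta : A -> tcarrier AH) (b : A) :=
  delta b = tens AH b 1.

(* B-balanced maps, B = A^{coH}: the defining condition of A (x)_B A *)
Definition balanced (H A : algType F) (AH : tensor A H) (delta : A -> tcarrier AH)
  : forall W : lmodType F, (A -> A -> W) -> Prop :=
  fun W f => forall a b a', coinv delta b -> f (a * b) a' = f a (b * a').

Definition galois_map (H A : algType F) (AH : tensor A H) (delta : A -> tcarrier AH)
    (ABA : tensor_with (balanced delta)) : tcarrier ABA -> tcarrier AH :=
  tlift ABA (fun a' a => tmul (tens AH a' 1) (delta a)).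

Definition rmulB (H A : algType F) (AH : tensor A H) (delta : A -> tcarrier AH)
    (ABA : tensor_with (balanced delta)) (c : A) : tcarrier ABA -> tcarrier ABA :=
  tlift ABA (fun x y => tens ABA x (y * c)).



Arguments galois_map {H A AH delta} ABA _.
Arguments rmulB {H A AH delta} ABA c _.

Definition transl (H A : algType F) (AH : tensor A H) (delta : A -> tcarrier AH)
    (ABA : tensor_with (balanced delta)) (chiinv : tcarrier AH -> tcarrier ABA)
    (h : H) : tcarrier ABA :=
  chiinv (tens AH 1 h).


Arguments transl {H A AH delta} ABA chiinv h.

Definition lcoact (H A : algType F) (AH : tensor A H) (delta : A -> tcarrier AH)
    (HA : tensor H A) (Sinv : H -> H) (a : A) : tcarrier HA :=
  tlift AH (fun a0 h => tens HA (Sinv h) a0) (delta a).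

(* A^H box ^H A = ker(delta (x) id - id (x) ldelta), both sides viewed in
   A (x) H (x) A (bracketed as A (x) (H (x) A) via the associator) *)
Definition cotensor (H A : algType F) (AH : tensor A H) (delta : A -> tcarrier AH)
    (HA : tensor H A) (Sinv : H -> H) (AA : tensor A A)
    (AH_A : tensor (tcarrier AH) A) (A_HA : tensor A (tcarrier HA))
    (X : tcarrier AA) : Prop :=
  tassoc AH AH_A HA A_HA (tmap AA AH_A delta id X)
  = tmap AA A_HA id (lcoact delta HA Sinv) X.

Definition coact_AA (H A : algType F) (AH : tensor A H) (delta : A -> tcarrier AH)
    (AA : tensor A A) (AA_H : tensor (tcarrier AA) H) : tcarrier AA -> tcarrier AA_H :=
  tlift AA (fun a a' =>
    tlift AH (fun a0 h0 =>
      tlift AH (fun a1 h1 => tens AA_H (tens AA a0 a1) (h0 * h1)) (delta a'))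
    (delta a)).

Definition coinvAA (H A : algType F) (AH : tensor A H) (delta : A -> tcarrier AH)
    (AA : tensor A A) (AA_H : tensor (tcarrier AA) H) (X : tcarrier AA) : Prop :=
  coact_AA delta AA_H X = tens AA_H X 1.

Definition galoisC (H A : algType F) (AH : tensor A H) (delta : A -> tcarrier AH)
    (ABA : tensor_with (balanced delta)) (chiinv : tcarrier AH -> tcarrier ABA)
    (AA : tensor A A) (A_ABA : tensor A (tcarrier ABA)) (X : tcarrier AA) : Prop :=
  tlift AA (fun a a' =>
    tlift AH (fun a0 h => tens A_ABA a0 (rmulB ABA a' (transl ABA chiinv h)))
      (delta a)) X
  = tmap AA A_ABA id (fun a' => tens ABA a' 1) X.

End Tensor.

Arguments tcarrier {F U V P} t : rename.
Arguments tens {F U V P} t : rename.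
Arguments tlift {F U V P} t {W} f : rename.
Arguments tmap {F U V U' V' P} T T' f g.
Arguments tassoc {F U V W} T1 T12 T2 T23.
Arguments galois_map {F H A AH delta} ABA _.
Arguments rmulB {F H A AH delta} ABA c _.
Arguments transl {F H A AH delta} ABA chiinv h.

(* The three conditions are compared by transporting them along linear maps, none of which
   needs to be an isomorphism: it suffices that f sends the two sides of one equation to the two
   sides of the other and that some g sends them back.
   - a (x) h (x) b |-> a (x) b_(0) (x) h b_(1) sends the two sides of the cotensor condition to
     delta^{A(x)A}(X) and X (x) 1, the second because S^-1(h_(2)) h_(1) = eps(h) 1.  The map
     (a (x) b) (x) k |-> a (x) k S^-1(b_(1)) (x) b_(0) goes back, by h_(2) S^-1(h_(1)) = eps(h) 1.
   - id (x) chi sends the two sides of the defining equation of C to delta^{A(x)A}(X) and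
     X (x) 1, because chi(y c) = chi(y) delta(c) and chi(tau(h)) = 1 (x) h; id (x) chi^-1 goes
     back.
   The two identities for S^-1 are S(h_(1)) h_(2) = eps(h) 1 = h_(1) S(h_(2)) transported by S,
   which is an anti-algebra map by the usual convolution argument. *)
From HB Require Import structures.
From mathcomp Require Import all_boot all_algebra.
From Stdlib Require Import FunctionalExtensionality.
Set Implicit Arguments. Unset Strict Implicit. Unset Printing Implicit Defensive.
Import GRing.Theory.
Local Open Scope ring_scope.

Create HintDb lin_db.

Lemma eq_transfer (T1 T2 : Type) (f : T1 -> T2) (g : T2 -> T1) x1 x2 y1 y2 :
  f x1 = y1 -> f x2 = y2 -> g y1 = x1 -> g y2 = x2 -> x1 = x2 <-> y1 = y2.
Proof. by move=> <- <- gy1 gy2; split=> [-> // | e]; rewrite -gy1 -gy2 e. Qed.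

Section Linear.
Variable F : fieldType.
Implicit Types U V W Y : lmodType F.

Definition lin_form U (e : U -> F) := forall a u v, e (a *: u + v) = a * e u + e v.

Lemma lin0 U W (f : U -> W) : lin f -> f 0 = 0.
Proof.
move=> f_lin; have := f_lin 1 0 0; rewrite !scale1r !addr0 => e.
by apply: (addrI (f 0)); rewrite addr0 -e.
Qed.

Lemma linZ U W (f : U -> W) a u : lin f -> f (a *: u) = a *: f u.
Proof. by move=> f_lin; have := f_lin a u 0; rewrite !addr0 (lin0 f_lin) addr0. Qed.

Lemma lin_id U : lin (fun x : U => x). Proof. by []. Qed.

Lemma lin_comp U V W (f : U -> V) (g : V -> W) : lin g -> lin f -> lin (fun x => g (f x)).
Proof. by move=> g_lin f_lin c u v; rewrite f_lin g_lin. Qed.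

Lemma lin_add U W (f g : U -> W) : lin f -> lin g -> lin (fun x => f x + g x).
Proof. by move=> f_lin g_lin c u v; rewrite f_lin g_lin scalerDr addrACA. Qed.

Lemma lin_scale U W c (f : U -> W) : lin f -> lin (fun x => c *: f x).
Proof. by move=> f_lin d u v; rewrite f_lin scalerDr !scalerA mulrC. Qed.

Lemma lin_form_scale U V W (e : V -> F) (w : W) (f : U -> V) :
  lin_form e -> lin f -> lin (fun x => e (f x) *: w).
Proof. by move=> e_lin f_lin c u v; rewrite f_lin e_lin scalerDl scalerA. Qed.

Lemma lin_mull (A : algType F) (c : A) : lin ( *%R c).
Proof. by move=> a u v; rewrite /= mulrDr scalerAr. Qed.

Lemma lin_mulr (A : algType F) (c : A) : lin (fun x => x * c).
Proof. by move=> a u v; rewrite mulrDl scalerAl. Qed.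

Lemma lin_mulr_comp U (A : algType F) (c : A) (f : U -> A) :
  lin f -> lin (fun x => f x * c).
Proof. by move=> f_lin; apply: (lin_comp (g := fun y => y * c)) => //; apply: lin_mulr. Qed.

Section TensorLift.
Variables (U V : lmodType F) (P : forall W : lmodType F, (U -> V -> W) -> Prop).
Variable T : tensor_with P.

Lemma lin_tensl v : lin (fun u => tens T u v).
Proof. by case: (tens_bilin T). Qed.

Lemma lin_tensr u : lin (tens T u).
Proof. by case: (tens_bilin T). Qed.

Lemma lin_tensl_comp Y v (f : Y -> U) : lin f -> lin (fun x => tens T (f x) v).
Proof. by move=> f_lin; apply: (lin_comp (g := fun u => tens T u v)) => //; apply: lin_tensl. Qed.

Lemma lin_tlift_comp Y W (f : U -> V -> W) (z : Y -> tcarrier T) :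
  bilin f -> P f -> lin z -> lin (fun x => tlift T f (z x)).
Proof. by move=> f_bil f_P z_lin; apply: lin_comp => //; apply: tlift_lin. Qed.

Lemma lin_tlift_param Y W (f : Y -> U -> V -> W) x :
  (forall p, bilin (f p)) -> (forall p, P (f p)) -> (forall u v, lin (fun p => f p u v)) ->
  lin (fun p => tlift T (f p) x).
Proof.
move=> f_bil f_P f_lin c p q; move: x; apply: tens_ext.
- exact: tlift_lin.
- by apply: lin_add; [apply: lin_scale|]; apply: tlift_lin.
by move=> u v; rewrite !tliftE // f_lin.
Qed.

Lemma tlift_postcomp W (W' : lmodType F) (g : W -> W') (f : U -> V -> W) :
  lin g -> bilin f -> P f -> bilin (fun u v => g (f u v)) -> P (fun u v => g (f u v)) ->
  forall x, g (tlift T f x) = tlift T (fun u v => g (f u v)) x.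
Proof.
move=> g_lin f_bil f_P gf_bil gf_P; apply: tens_ext.
- by apply: lin_comp => //; apply: tlift_lin.
- exact: tlift_lin.
by move=> u v; rewrite !tliftE.
Qed.

Lemma eq_tlift W (f g : U -> V -> W) x :
  (forall u v, f u v = g u v) -> tlift T f x = tlift T g x.
Proof.
by move=> efg; congr tlift; apply: functional_extensionality => u;
  apply: functional_extensionality.
Qed.

End TensorLift.

Lemma tlift_tlift U1 V1 U2 V2 W P1 P2
    (T1 : tensor_with (U:=U1) (V:=V1) P1) (T2 : tensor_with (U:=U2) (V:=V2) P2)
    (f1 : U1 -> V1 -> W) (f2 : U2 -> V2 -> tcarrier T1) x :
  bilin f1 -> P1 W f1 -> bilin f2 -> P2 _ f2 ->
  bilin (fun u v => tlift T1 f1 (f2 u v)) -> P2 W (fun u v => tlift T1 f1 (f2 u v)) ->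
  tlift T1 f1 (tlift T2 f2 x) = tlift T2 (fun u v => tlift T1 f1 (f2 u v)) x.
Proof. by move=> *; apply: tlift_postcomp => //; apply: tlift_lin. Qed.

End Linear.

#[export] Hint Extern 1 (lin _) => exact: lin_id : lin_db.
#[export] Hint Extern 1 (lin _) => exact: lin_mull : lin_db.
#[export] Hint Extern 1 (lin _) => exact: lin_mulr : lin_db.
#[export] Hint Extern 1 (lin _) => exact: lin_tensr : lin_db.

Ltac solve_lin :=
  let rec go :=
  cbv beta;
  lazymatch goal with
  | |- _ = _ => fail
  | |- lin _ => lin_go
  | |- bilin _ => split; go
  | |- forall _, _ => intro; go
  | |- @no_cond _ _ _ _ _ => exact I
  | |- _ => solve [auto with lin_db]
  end
  with lin_go := first
     [ solve [auto with lin_db]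
     | match goal with
       | |- lin (tlift _ _) => eapply tlift_lin; go
       | |- lin (fun x => tens _ (@?a x) _) => eapply lin_tensl_comp; go
       | |- lin (fun x => tlift _ _ (@?z x)) => eapply lin_tlift_comp; go
       | |- lin (fun x => tlift _ (@?f x) _) => eapply lin_tlift_param; go
       | |- lin (fun x => @?a x + @?b x) => eapply lin_add; go
       | |- lin (fun x => _ *: @?a x) => eapply lin_scale; go
       | |- lin (fun x => ?e (@?a x) *: ?w) => eapply (@lin_form_scale _ _ _ _ e w a); go
       | |- lin (fun x => @?a x * _) => eapply lin_mulr_comp; go
       (* an identity inner map would make [lin_comp] loop *)
       | |- lin (fun x => ?g x) => fail 1
       | |- lin (fun x => ?g x ?y) => fail 1
       | |- lin (fun x => ?g x ?y ?y') => fail 1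
       | |- lin (fun x => ?g (@?a x)) => eapply (@lin_comp _ _ _ _ a g); go
       | |- lin (fun x => ?g (@?a x) ?y) => eapply (@lin_comp _ _ _ _ a (fun z => g z y)); go
       | |- lin (fun x => ?g (@?a x) ?y ?y') =>
           eapply (@lin_comp _ _ _ _ a (fun z => g z y y')); go
       end ] in go.

Ltac simpl_tlift := repeat (rewrite tliftE; try solve_lin).
Ltac fuse_tlift := rewrite tlift_tlift; try solve_lin.
Ltac simpl_tlift_under := under eq_tlift => ? ? do simpl_tlift.

Section TliftCalculus.
Variable F : fieldType.

Lemma mulr_tlift (U V : lmodType F) (A : algType F) (T : tensor U V) (c : A) (f : U -> V -> A) x :
  bilin f -> c * tlift T f x = tlift T (fun u v => c * f u v) x.
Proof. by case=> f_linl f_linr; apply: (tlift_postcomp (g := *%R c)); solve_lin. Qed.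

Lemma tlift_mulr (U V : lmodType F) (A : algType F) (T : tensor U V) (c : A) (f : U -> V -> A) x :
  bilin f -> tlift T f x * c = tlift T (fun u v => f u v * c) x.
Proof. by case=> f_linl f_linr; apply: (tlift_postcomp (g := fun y => y * c)); solve_lin. Qed.

Lemma scaler_tlift (U V W : lmodType F) (T : tensor U V) (c : F) (f : U -> V -> W) x :
  bilin f -> c *: tlift T f x = tlift T (fun u v => c *: f u v) x.
Proof. by case=> f_linl f_linr; apply: (tlift_postcomp (g := fun y => c *: y)); solve_lin. Qed.

Lemma exchange_tlift (U1 V1 U2 V2 W : lmodType F) (T1 : tensor U1 V1) (T2 : tensor U2 V2)
    (f : U1 -> V1 -> U2 -> V2 -> W) x y :
  (forall v u' v', lin (fun u => f u v u' v')) -> (forall u u' v', lin (fun v => f u v u' v')) ->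
  (forall u v v', lin (fun u' => f u v u' v')) -> (forall u v u', lin (f u v u')) ->
  tlift T1 (fun u v => tlift T2 (f u v) y) x
  = tlift T2 (fun u' v' => tlift T1 (fun u v => f u v u' v') x) y.
Proof.
move=> *; move: x; apply: tens_ext; try solve_lin.
by move=> u v; simpl_tlift; apply: eq_tlift => a b; simpl_tlift.
Qed.

Variables (U V : algType F) (T : tensor U V).

Lemma tmul_linl (y : tcarrier T) : lin (fun x => tmul x y).
Proof. rewrite /tmul; solve_lin. Qed.

Lemma tmul_linr (x : tcarrier T) : lin (tmul x).
Proof. rewrite /tmul; solve_lin. Qed.

End TliftCalculus.

#[export] Hint Extern 1 (lin _) => exact: tmul_linl : lin_db.
#[export] Hint Extern 1 (lin _) => exact: tmul_linr : lin_db.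

Section TensorProductAlgebra.
Variables (F : fieldType) (U V : algType F) (T : tensor U V).

Lemma tmul_tensl a b (y : tcarrier T) :
  tmul (tens T a b) y = tlift T (fun u v => tens T (a * u) (b * v)) y.
Proof. by rewrite /tmul; simpl_tlift. Qed.

Lemma tmul_tens a b c d : tmul (tens T a b) (tens T c d) = tens T (a * c) (b * d).
Proof. by rewrite tmul_tensl; simpl_tlift. Qed.

Lemma tmulA (x y z : tcarrier T) : tmul (tmul x y) z = tmul x (tmul y z).
Proof.
move: x; apply: tens_ext; try solve_lin.
move=> a b; rewrite !tmul_tensl.
move: y; apply: tens_ext; try solve_lin.
move=> c d; simpl_tlift; rewrite !tmul_tensl; fuse_tlift.
by apply: eq_tlift => u v; simpl_tlift; rewrite !mulrA.
Qed.

End TensorProductAlgebra.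

Section Coassociativity.
Variables (F : fieldType) (H A : lmodType F) (HH : tensor H H) (Delta : H -> tcarrier HH).
Variables (AH : tensor A H) (AH_H : tensor (tcarrier AH) H) (A_HH : tensor A (tcarrier HH)).
Variable delta : A -> tcarrier AH.
Hypotheses (Delta_lin : lin Delta) (delta_lin : lin delta).
Hypothesis delta_coassoc : forall a,
  tassoc AH AH_H HH A_HH (tmap AH AH_H delta id (delta a)) = tmap AH A_HH id Delta (delta a).

Lemma tlift_coassoc (W : lmodType F) (phi : A -> H -> H -> W) :
  (forall y z, lin (fun x => phi x y z)) -> (forall x z, lin (fun y => phi x y z)) ->
  (forall x y, lin (phi x y)) -> forall a,
  tlift AH (fun u v => tlift AH (fun u0 h => phi u0 h v) (delta u)) (delta a)
  = tlift AH (fun u v => tlift HH (phi u) (Delta v)) (delta a).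
Proof.
move=> phi_lin1 phi_lin2 phi_lin3 a.
set L := tlift A_HH (fun x y => tlift HH (phi x) y).
have L_lhs z : L (tassoc AH AH_H HH A_HH (tmap AH AH_H delta id z))
    = tlift AH (fun u v => tlift AH (fun u0 h => phi u0 h v) (delta u)) z.
  move: z; apply: tens_ext; rewrite /L /tassoc /tmap; try solve_lin.
  by move=> u v; simpl_tlift; fuse_tlift; simpl_tlift_under.
have L_rhs z : L (tmap AH A_HH id Delta z) = tlift AH (fun u v => tlift HH (phi u) (Delta v)) z.
  move: z; apply: tens_ext; rewrite /L /tmap; try solve_lin.
  by move=> u v; simpl_tlift.
by rewrite -L_lhs -L_rhs delta_coassoc.
Qed.

End Coassociativity.

Section HopfAlgebra.
Variables (F : fieldType) (H : algType F) (HH : tensor H H) (HH_H : tensor (tcarrier HH) H).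
Variables (H_HH : tensor H (tcarrier HH)) (Delta : H -> tcarrier HH) (eps : H -> F) (S : H -> H).
Hypothesis hopf : is_hopf HH_H H_HH Delta eps S.

Lemma comul_lin : lin Delta. Proof. by case: hopf => -[]. Qed.
Lemma comulM h h' : Delta (h * h') = tmul (Delta h) (Delta h'). Proof. by case: hopf => -[]. Qed.
Lemma comul1 : Delta 1 = tens HH 1 1. Proof. by case: hopf => -[]. Qed.
Lemma comul_coassoc h :
  tassoc HH HH_H HH H_HH (tmap HH HH_H Delta id (Delta h)) = tmap HH H_HH id Delta (Delta h).
Proof. by case: hopf => _ []. Qed.
Lemma counit_lin : lin_form eps. Proof. by case: hopf => _ [_ [[]]]. Qed.
Lemma counitM h h' : eps (h * h') = eps h * eps h'. Proof. by case: hopf => _ [_ [[]]]. Qed.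
Lemma counit1 : eps 1 = 1. Proof. by case: hopf => _ [_ [[]]]. Qed.
Lemma comul_counitl h : tlift HH (fun h1 h2 => eps h1 *: h2) (Delta h) = h.
Proof. by case: hopf => _ [_ [_ []]]. Qed.
Lemma comul_counitr h : tlift HH (fun h1 h2 => eps h2 *: h1) (Delta h) = h.
Proof. by case: hopf => _ [_ [_ [_ []]]]. Qed.
Lemma antipode_lin : lin S. Proof. by case: hopf => _ [_ [_ [_ [_ []]]]]. Qed.
Lemma antipodeL h : tlift HH (fun h1 h2 => S h1 * h2) (Delta h) = eps h *: 1.
Proof. by case: hopf => _ [_ [_ [_ [_ []]]]]. Qed.
Lemma antipodeR h : tlift HH (fun h1 h2 => h1 * S h2) (Delta h) = eps h *: 1.
Proof. by case: hopf => _ [_ [_ [_ [_ []]]]]. Qed.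

Local Hint Resolve comul_lin counit_lin antipode_lin : lin_db.

Definition conv (f k : H -> H -> H) (g h : H) : H :=
  tlift HH (fun g1 g2 => tlift HH (fun h1 h2 => f g1 h1 * k g2 h2) (Delta h)) (Delta g).

Definition conv_unit (g h : H) : H := (eps g * eps h) *: 1.

Lemma conv_assoc f m k : bilin f -> bilin m -> bilin k ->
  forall g h, conv f (conv m k) g h = conv (conv f m) k g h.
Proof.
move=> [f_linl f_linr] [m_linl m_linr] [k_linl k_linr] g h.
set phiL := fun x y z => tlift HH (fun a b =>
  tlift HH (fun a1 a2 => f x a1 * m y a2 * k z b) (Delta a)) (Delta h).
set phiR := fun x y z => tlift HH (fun a b =>
  tlift HH (fun b1 b2 => f x a * (m y b1 * k z b2)) (Delta b)) (Delta h).
have phiLR x y z : phiL x y z = phiR x y z.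
  rewrite /phiL /phiR (tlift_coassoc comul_lin comul_lin comul_coassoc); try solve_lin.
  by apply: eq_tlift => a b; apply: eq_tlift => c d; rewrite mulrA.
transitivity (tlift HH (fun x y => tlift HH (phiR x) (Delta y)) (Delta g)).
  apply: eq_tlift => g1 g2; rewrite /phiR [RHS]exchange_tlift; try solve_lin.
  apply: eq_tlift => h1 h2; rewrite mulr_tlift; try solve_lin.
  by apply: eq_tlift => a b; rewrite mulr_tlift //; solve_lin.
transitivity (tlift HH (fun x y => tlift HH (phiL x) (Delta y)) (Delta g)).
  by apply: eq_tlift => x y; apply: eq_tlift => y1 y2; rewrite phiLR.
rewrite -(tlift_coassoc comul_lin comul_lin comul_coassoc) /phiL; try solve_lin.
apply: eq_tlift => g1 g2; rewrite [LHS]exchange_tlift; try solve_lin.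
apply: eq_tlift => h1 h2; rewrite tlift_mulr; try solve_lin.
by apply: eq_tlift => a b; rewrite tlift_mulr //; solve_lin.
Qed.

Lemma conv_unitl k : bilin k -> forall g h, conv conv_unit k g h = k g h.
Proof.
move=> [k_linl k_linr] g h; rewrite /conv /conv_unit.
transitivity (tlift HH (fun g1 g2 => eps g1 *: k g2 h) (Delta g)).
  apply: eq_tlift => g1 g2.
  rewrite -[in RHS](comul_counitl h) (tlift_postcomp (g := k g2)) ?scaler_tlift; try solve_lin.
  by apply: eq_tlift => a b; rewrite -scalerAl mul1r -scalerA (linZ _ _ (k_linr g2)).
rewrite -[in RHS](comul_counitl g) (tlift_postcomp (g := fun z => k z h)); try solve_lin.
by apply: eq_tlift => a b; rewrite (linZ _ _ (k_linl h)).
Qed.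

Lemma conv_unitr k : bilin k -> forall g h, conv k conv_unit g h = k g h.
Proof.
move=> [k_linl k_linr] g h; rewrite /conv /conv_unit.
transitivity (tlift HH (fun g1 g2 => eps g2 *: k g1 h) (Delta g)).
  apply: eq_tlift => g1 g2.
  rewrite -[in RHS](comul_counitr h) (tlift_postcomp (g := k g1)) ?scaler_tlift; try solve_lin.
  by apply: eq_tlift => a b; rewrite -scalerAr mulr1 -scalerA (linZ _ _ (k_linr g1)).
rewrite -[in RHS](comul_counitr g) (tlift_postcomp (g := fun z => k z h)); try solve_lin.
by apply: eq_tlift => a b; rewrite (linZ _ _ (k_linl h)).
Qed.

Lemma conv_antipode_mul : conv (fun x y => S (x * y)) *%R = conv_unit.
Proof.
apply: functional_extensionality => g; apply: functional_extensionality => h.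
rewrite /conv_unit -counitM -antipodeL comulM /tmul /conv.
fuse_tlift; apply: eq_tlift => a b; fuse_tlift; apply: eq_tlift => c d.
by simpl_tlift.
Qed.

Lemma conv_mul_antipode : conv *%R (fun x y => S y * S x) = conv_unit.
Proof.
apply: functional_extensionality => g; apply: functional_extensionality => h.
rewrite /conv /conv_unit.
transitivity (tlift HH (fun g1 g2 => eps h *: (g1 * S g2)) (Delta g)).
  apply: eq_tlift => g1 g2.
  have -> : eps h *: (g1 * S g2) = g1 * tlift HH (fun a b => a * S b) (Delta h) * S g2.
    by rewrite antipodeR -scalerAr mulr1 -scalerAl.
  rewrite mulr_tlift ?tlift_mulr; try solve_lin.
  by apply: eq_tlift => a b; rewrite !mulrA.
rewrite -scaler_tlift; try solve_lin.
by rewrite antipodeR scalerA mulrC.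
Qed.

Lemma antipodeM g h : S (g * h) = S h * S g.
Proof.
rewrite -(conv_unitr (k := fun x y => S (x * y))); try solve_lin.
rewrite -conv_mul_antipode conv_assoc; try solve_lin.
by rewrite conv_antipode_mul conv_unitl //; solve_lin.
Qed.

Lemma antipode1 : S 1 = 1.
Proof. by have := antipodeL 1; rewrite comul1 counit1 scale1r; simpl_tlift; rewrite mulr1. Qed.

Variable Sinv : H -> H.
Hypotheses (SK : cancel S Sinv) (SinvK : cancel Sinv S).

Lemma Sinv_lin : lin Sinv.
Proof. by move=> a u v; apply: (can_inj SK); rewrite SinvK antipode_lin !SinvK. Qed.

Local Hint Resolve Sinv_lin : lin_db.

Lemma Sinv_antipodeL h : tlift HH (fun h1 h2 => Sinv h2 * h1) (Delta h) = eps h *: 1.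
Proof.
apply: (can_inj SK); rewrite (tlift_postcomp (g := S)); try solve_lin.
rewrite (linZ _ _ antipode_lin) antipode1 -antipodeL.
by apply: eq_tlift => x y; rewrite antipodeM SinvK.
Qed.

Lemma Sinv_antipodeR h : tlift HH (fun h1 h2 => h2 * Sinv h1) (Delta h) = eps h *: 1.
Proof.
apply: (can_inj SK); rewrite (tlift_postcomp (g := S)); try solve_lin.
rewrite (linZ _ _ antipode_lin) antipode1 -antipodeR.
by apply: eq_tlift => x y; rewrite antipodeM SinvK.
Qed.

End HopfAlgebra.

Section HopfGalois.
Variables (F : fieldType) (H A : algType F).
Variables (HH : tensor H H) (HH_H : tensor (tcarrier HH) H) (H_HH : tensor H (tcarrier HH)).
Variables (Delta : H -> tcarrier HH) (eps : H -> F) (S Sinv : H -> H).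
Hypothesis hopf : is_hopf HH_H H_HH Delta eps S.
Hypotheses (SK : cancel S Sinv) (SinvK : cancel Sinv S).
Variables (AH : tensor A H) (AH_H : tensor (tcarrier AH) H) (A_HH : tensor A (tcarrier HH)).
Variable delta : A -> tcarrier AH.
Hypothesis comod : is_comod_alg Delta eps AH_H A_HH delta.
Variables (ABA : tensor_with (balanced delta)) (chiinv : tcarrier AH -> tcarrier ABA).
Hypotheses (chiK : cancel (galois_map ABA) chiinv) (chiinvK : cancel chiinv (galois_map ABA)).
Variables (AA : tensor A A) (HA : tensor H A).
Variables (AH_A : tensor (tcarrier AH) A) (A_HA : tensor A (tcarrier HA)).
Variables (AA_H : tensor (tcarrier AA) H) (A_ABA : tensor A (tcarrier ABA)).

Lemma coact_lin : lin delta. Proof. by case: comod. Qed.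
Lemma coact_coassoc a :
  tassoc AH AH_H HH A_HH (tmap AH AH_H delta id (delta a)) = tmap AH A_HH id Delta (delta a).
Proof. by case: comod. Qed.
Lemma coact_counit a : tlift AH (fun a0 h => eps h *: a0) (delta a) = a.
Proof. by case: comod. Qed.
Lemma coactM a a' : delta (a * a') = tmul (delta a) (delta a'). Proof. by case: comod. Qed.
Lemma coact1 : delta 1 = tens AH 1 1. Proof. by case: comod. Qed.

Local Hint Extern 1 (lin _) => exact: (comul_lin hopf) : lin_db.
Local Hint Extern 1 (lin_form _) => exact: (counit_lin hopf) : lin_db.
Local Hint Extern 1 (lin _) => exact: (Sinv_lin hopf SK SinvK) : lin_db.
Local Hint Resolve coact_lin : lin_db.

Lemma tlift_coact_coassoc (W : lmodType F) (phi : A -> H -> H -> W) :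
  (forall y z, lin (fun x => phi x y z)) -> (forall x z, lin (fun y => phi x y z)) ->
  (forall x y, lin (phi x y)) -> forall a,
  tlift AH (fun u v => tlift AH (fun u0 h => phi u0 h v) (delta u)) (delta a)
  = tlift AH (fun u v => tlift HH (phi u) (Delta v)) (delta a).
Proof. exact: (tlift_coassoc (comul_lin hopf) coact_lin coact_coassoc). Qed.

Definition cotensor_lhs X := tassoc AH AH_A HA A_HA (tmap AA AH_A delta id X).
Definition cotensor_rhs X := tmap AA A_HA id (lcoact delta HA Sinv) X.

Definition coact_twist : tcarrier A_HA -> tcarrier AA_H :=
  tlift A_HA (fun a y => tlift HA (fun h b =>
    tlift AH (fun b0 h1 => tens AA_H (tens AA a b0) (h * h1)) (delta b)) y).
Definition coact_untwist : tcarrier AA_H -> tcarrier A_HA :=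
  tlift AA_H (fun x k => tlift AA (fun a b =>
    tlift AH (fun b0 h1 => tens A_HA a (tens HA (k * Sinv h1) b0)) (delta b)) x).

Ltac unfold_cotensor :=
  rewrite /coact_twist /coact_untwist /cotensor_lhs /cotensor_rhs /tassoc /tmap /lcoact /coact_AA.

Lemma coact_twist_cotensor_lhs X : coact_twist (cotensor_lhs X) = coact_AA delta AA_H X.
Proof.
move: X; apply: tens_ext; unfold_cotensor; try solve_lin.
by move=> a b; simpl_tlift; fuse_tlift; simpl_tlift_under.
Qed.

Lemma coact_twist_cotensor_rhs X : coact_twist (cotensor_rhs X) = tens AA_H X 1.
Proof.
move: X; apply: tens_ext; unfold_cotensor; try solve_lin.
move=> a b; simpl_tlift; fuse_tlift; simpl_tlift_under.
rewrite (tlift_coact_coassoc (phi := fun u0 k v => tens AA_H (tens AA a u0) (Sinv v * k)));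
  try solve_lin.
transitivity (tlift AH (fun u v => tens AA_H (tens AA a u) (eps v *: 1)) (delta b)).
  apply: eq_tlift => u v.
  by rewrite -(Sinv_antipodeL hopf SK SinvK)
    (tlift_postcomp (g := tens AA_H (tens AA a u))) //; solve_lin.
rewrite -[in RHS](coact_counit b) (tlift_postcomp (g := fun z => tens AA_H (tens AA a z) 1));
  try solve_lin.
apply: eq_tlift => u v.
by rewrite !(linZ _ _ (lin_tensr _ _)) (linZ _ _ (lin_tensl _ _)).
Qed.

Lemma coact_untwist_tens1 X : coact_untwist (tens AA_H X 1) = cotensor_rhs X.
Proof.
move: X; apply: tens_ext; unfold_cotensor; try solve_lin.
move=> a b; simpl_tlift; rewrite (tlift_postcomp (g := tens A_HA a)); try solve_lin.
by apply: eq_tlift => u v; rewrite mul1r.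
Qed.

Lemma coact_untwist_coact_AA X : coact_untwist (coact_AA delta AA_H X) = cotensor_lhs X.
Proof.
move: X; apply: tens_ext; unfold_cotensor; try solve_lin.
move=> a b; simpl_tlift; fuse_tlift; apply: eq_tlift => a0 h0; fuse_tlift; simpl_tlift_under.
rewrite (tlift_coact_coassoc
  (phi := fun u0 k v => tens A_HA a0 (tens HA ((h0 * v) * Sinv k) u0))); try solve_lin.
transitivity (tlift AH (fun u v => tens A_HA a0 (tens HA h0 (eps v *: u))) (delta b)).
  apply: eq_tlift => u v.
  transitivity (tens A_HA a0 (tens HA (h0 * tlift HH (fun k1 k2 => k2 * Sinv k1) (Delta v)) u)).
    rewrite mulr_tlift; try solve_lin.
    rewrite (tlift_postcomp (g := fun z => tens A_HA a0 (tens HA z u))); try solve_lin.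
    by apply: eq_tlift => k1 k2; rewrite mulrA.
  rewrite (Sinv_antipodeR hopf SK SinvK) -scalerAr mulr1.
  by rewrite (linZ _ _ (lin_tensl HA u)) (linZ _ _ (lin_tensr HA h0)).
by rewrite -(tlift_postcomp (g := fun z => tens A_HA a0 (tens HA h0 z))) ?coact_counit //;
  solve_lin.
Qed.

Lemma galois_map_balanced : balanced delta (fun a' a => tmul (tens AH a' 1) (delta a)).
Proof. by move=> a b a' b_coinv /=; rewrite coactM b_coinv -tmulA tmul_tens mulr1. Qed.

Lemma rmulB_balanced c : balanced delta (fun x y => tens ABA x (y * c)).
Proof. by move=> a b a' b_coinv /=; rewrite (tens_P ABA) // mulrA. Qed.

Local Hint Resolve galois_map_balanced rmulB_balanced : lin_db.

Lemma galois_mapE x y : galois_map ABA (tens ABA x y) = tmul (tens AH x 1) (delta y).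
Proof. by rewrite /galois_map; simpl_tlift. Qed.

Lemma galois_map_lin : lin (galois_map ABA).
Proof. by rewrite /galois_map; solve_lin. Qed.

Lemma chiinv_lin : lin chiinv.
Proof. by move=> c u v; apply: (can_inj chiK); rewrite chiinvK galois_map_lin !chiinvK. Qed.

Lemma rmulBE c x y : rmulB ABA c (tens ABA x y) = tens ABA x (y * c).
Proof. by rewrite /rmulB; simpl_tlift. Qed.

Lemma rmulB_lin c : lin (rmulB ABA c).
Proof. by rewrite /rmulB; solve_lin. Qed.

Lemma rmulB_linl y : lin (fun c => rmulB ABA c y).
Proof. by rewrite /rmulB; solve_lin. Qed.

Local Hint Resolve galois_map_lin chiinv_lin rmulB_lin rmulB_linl : lin_db.

Lemma transl_lin : lin (transl ABA chiinv).
Proof. by rewrite /transl; solve_lin. Qed.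

Local Hint Resolve transl_lin : lin_db.

Lemma galois_map_rmulB c y : galois_map ABA (rmulB ABA c y) = tmul (galois_map ABA y) (delta c).
Proof.
move: y; apply: tens_ext; try solve_lin.
by move=> x y; rewrite rmulBE !galois_mapE coactM tmulA.
Qed.

Definition galoisC_lhs X := tlift AA (fun a a' => tlift AH (fun a0 h =>
  tens A_ABA a0 (rmulB ABA a' (transl ABA chiinv h))) (delta a)) X.
Definition galoisC_rhs X := tmap AA A_ABA id (fun a' => tens ABA a' 1) X.

Definition id_galois_map : tcarrier A_ABA -> tcarrier AA_H :=
  tlift A_ABA (fun a y => tlift AH (fun a' h => tens AA_H (tens AA a a') h) (galois_map ABA y)).
Definition id_chiinv : tcarrier AA_H -> tcarrier A_ABA :=
  tlift AA_H (fun x h => tlift AA (fun a a' => tens A_ABA a (chiinv (tens AH a' h))) x).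

Ltac unfold_galoisC :=
  rewrite /id_galois_map /id_chiinv /galoisC_lhs /galoisC_rhs /tmap /coact_AA.

Lemma id_galois_map_galoisC_rhs X : id_galois_map (galoisC_rhs X) = tens AA_H X 1.
Proof.
move: X; apply: tens_ext; unfold_galoisC; try solve_lin.
by move=> a b; simpl_tlift; rewrite galois_mapE coact1 tmul_tens !mulr1; simpl_tlift.
Qed.

Lemma id_chiinv_tens1 X : id_chiinv (tens AA_H X 1) = galoisC_rhs X.
Proof.
move: X; apply: tens_ext; unfold_galoisC; try solve_lin.
by move=> a b; simpl_tlift; rewrite -[tens ABA b 1]chiK galois_mapE coact1 tmul_tens !mulr1.
Qed.

Lemma id_galois_map_galoisC_lhs X : id_galois_map (galoisC_lhs X) = coact_AA delta AA_H X.
Proof.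
move: X; apply: tens_ext; unfold_galoisC; try solve_lin.
move=> a b; simpl_tlift; fuse_tlift; apply: eq_tlift => a0 h; simpl_tlift.
rewrite galois_map_rmulB /transl chiinvK tmul_tensl; fuse_tlift; simpl_tlift_under.
by apply: eq_tlift => u v; rewrite mul1r.
Qed.

Lemma id_chiinv_coact_AA X : id_chiinv (coact_AA delta AA_H X) = galoisC_lhs X.
Proof.
move: X; apply: tens_ext; unfold_galoisC; try solve_lin.
move=> a b; simpl_tlift; fuse_tlift; apply: eq_tlift => a0 h0; fuse_tlift; simpl_tlift_under.
rewrite -(tlift_postcomp (g := fun z => tens A_ABA a0 (chiinv z))); try solve_lin.
rewrite /transl -[rmulB ABA b _]chiK galois_map_rmulB chiinvK tmul_tensl.
by congr (tens A_ABA a0 (chiinv _)); apply: eq_tlift => u v; rewrite mul1r.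
Qed.

Lemma cotensor_iff_coinvAA X :
  cotensor delta Sinv AH_A A_HA X <-> coinvAA delta AA_H X.
Proof.
apply: eq_transfer.
- exact: coact_twist_cotensor_lhs.
- exact: coact_twist_cotensor_rhs.
- exact: coact_untwist_coact_AA.
- exact: coact_untwist_tens1.
Qed.

Lemma coinvAA_iff_galoisC X : coinvAA delta AA_H X <-> galoisC chiinv A_ABA X.
Proof.
apply: eq_transfer.
- exact: id_chiinv_coact_AA.
- exact: id_chiinv_tens1.
- exact: id_galois_map_galoisC_lhs.
- exact: id_galois_map_galoisC_rhs.
Qed.

End HopfGalois.

Unset Implicit Arguments.

Theorem lemma3p3 (F : fieldType) (H A : algType F)
  (* H is a Hopf algebra (Delta, eps, S) with invertible antipode S^{-1} = Sinv *)
  (HH : tensor H H) (HH_H : tensor (tcarrier HH) H) (H_HH : tensor H (tcarrier HH))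
  (Delta : H -> tcarrier HH) (eps : H -> F) (S Sinv : H -> H)
  (hopf : is_hopf HH_H H_HH Delta eps S)
  (SK : cancel S Sinv) (SinvK : cancel Sinv S)
  (* A is a right H-comodule algebra *)
  (AH : tensor A H) (AH_H : tensor (tcarrier AH) H) (A_HH : tensor A (tcarrier HH))
  (delta : A -> tcarrier AH)
  (comod : is_comod_alg Delta eps AH_H A_HH delta)
  (* A^{coH} = B \subseteq A is H-Hopf-Galois: chi is bijective, with inverse chiinv *)
  (ABA : tensor_with (balanced delta)) (chiinv : tcarrier AH -> tcarrier ABA)
  (chiK : cancel (galois_map ABA) chiinv) (chiinvK : cancel chiinv (galois_map ABA))
  (* the remaining tensor products occurring in the statement *)
  (AA : tensor A A) (HA : tensor H A)
  (AH_A : tensor (tcarrier AH) A) (A_HA : tensor A (tcarrier HA))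
  (AA_H : tensor (tcarrier AA) H) (A_ABA : tensor A (tcarrier ABA)) :
  forall X : tcarrier AA,
    (cotensor delta Sinv AH_A A_HA X <-> coinvAA delta AA_H X) /\
    (coinvAA delta AA_H X <-> galoisC chiinv A_ABA X).
Proof.
move=> X; split.
- exact: (cotensor_iff_coinvAA hopf SK SinvK comod).
- exact: (coinvAA_iff_galoisC comod chiK chiinvK).
Qed.
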